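(* For every $n\ge 3$, the Grothendieck constant of the circuit (cycle) $C_n$ of length $n$ is $\kappa(C_n)=\frac{n}{n-2}\cos\left(\frac{\pi}{n}\right)$.
   Context: For a graph $G=([n],E)$ and $w\in\mathbb{R}^E$, let $\mathrm{ip}(G,w)=\max_{x\in\{\pm1\}^n}\sum_{ij\in E}w_{ij}x_ix_j$ and $\mathrm{sdp}(G,w)=\max\sum_{ij\in E}w_{ij}u_i^Tu_j$, the maximum over unit vectors $u_1,\dots,u_n\in\mathbb{R}^n$. The Grothendieck constant of $G$ is $\kappa(G)=\sup_{w\in\mathbb{R}^E}\mathrm{sdp}(G,w)/\mathrm{ip}(G,w)$. *)

From HB Require Import structures.
From mathcomp Require Import all_boot all_order all_algebra.
From mathcomp Require Import all_classical all_reals all_analysis.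
Set Implicit Arguments. Unset Strict Implicit. Unset Printing Implicit Defensive.
Import Order.TTheory GRing.Theory Num.Theory.
Local Open Scope classical_set_scope.
Local Open Scope ring_scope.

(* A simple graph on vertex set [n] = 'I_n, given by a (symmetric, irreflexive)
   adjacency relation G.  The edge set E is {ij : i < j, G i j}.
   Edge weights w in R^E are represented by a function w : 'I_n -> 'I_n -> R,
   of which only the values w i j with i < j and G i j are used. *)

Definition edge_sum (R : realType) (n : nat) (G : rel 'I_n)
  (w : 'I_n -> 'I_n -> R) (f : 'I_n -> 'I_n -> R) : R :=
  \sum_(i < n) \sum_(j < n | (i < j)%N && G i j) w i j * f i j.

Definition ip (R : realType) (n : nat) (G : rel 'I_n) (w : 'I_n -> 'I_n -> R) : R :=
  sup [set v | exists x : 'I_n -> R,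
         (forall i, x i = 1 \/ x i = -1) /\ v = edge_sum G w (fun i j => x i * x j)].

Definition sdp (R : realType) (n : nat) (G : rel 'I_n) (w : 'I_n -> 'I_n -> R) : R :=
  sup [set v | exists u : 'I_n -> 'I_n -> R,
         (forall i, \sum_(k < n) u i k ^+ 2 = 1) /\
         v = edge_sum G w (fun i j => \sum_(k < n) u i k * u j k)].

(* kappa(G) = sup_w sdp(G,w)/ip(G,w), over the weights for which the ratio is
   defined (ip(G,w) > 0, i.e. w not identically 0 on E). *)
Definition grothendieck_const (R : realType) (n : nat) (G : rel 'I_n) : R :=
  sup [set r | exists w : 'I_n -> 'I_n -> R, 0 < ip G w /\ r = sdp G w / ip G w].

Definition cycle_graph (n : nat) : rel 'I_n :=
  fun i j => (val j == (val i).+1 %% n)%N || (val i == (val j).+1 %% n)%N.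

(* Write a_i for the weight of the path edge {i, i+1} (i < N - 1) and c for that of
   the closing edge {0, N - 1}.  Flipping the signs of variables (a gauge change,
   which preserves both ip and sdp) makes every a_i nonnegative and turns c into
   some t with |t| = |c|.  If t >= 0, x = 1 satisfies every edge and ip is the
   total weight W, which bounds sdp.  Otherwise the cycle is frustrated: cutting
   it at a lightest edge (weight mu) gives ip >= W - 2 mu, while writing the
   weights as mu times the uniformly weighted frustrated cycle plus nonnegative
   weights gives sdp <= (W - N mu) + mu N cos (pi / N), because the form
   sum_i x_i x_(i+1) - x_0 x_(N-1) has top eigenvalue cos (pi / N).  As
   kappa (N - 2) = N cos (pi / N) and kappa >= 1, this is at most kappa (W - 2 mu).
   The uniformly weighted frustrated cycle attains the ratio: its ip is N - 2 and
   the regular N-gon gives sdp = N cos (pi / N). *)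

From HB Require Import structures.
From mathcomp Require Import all_boot all_order all_algebra.
From mathcomp Require Import all_classical all_reals all_analysis.
From mathcomp Require Import ring lra zify.
Import Order.TTheory GRing.Theory Num.Theory.
Set Implicit Arguments.
Unset Strict Implicit.
Unset Printing Implicit Defensive.
Local Open Scope ring_scope.

Section GenericBounds.
Variables (R : realType) (n : nat) (G : rel 'I_n).

Definition is_sign (x : R) : Prop := x = 1 \/ x = -1.

Lemma is_sign_sqr x : is_sign x -> x * x = 1.
Proof. by case=> ->; rewrite ?mulr1 ?mulrNN ?mulr1. Qed.

Lemma is_signM x y : is_sign x -> is_sign y -> is_sign (x * y).
Proof.
by case=> ->; case=> ->; rewrite ?mulr1 ?mulrN1 ?mulN1r ?opprK; [left|right|right|left].
Qed.

Lemma is_sign_conj s t x y : is_sign s -> is_sign t -> s * t * (s * x * (t * y)) = x * y.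
Proof.
move=> /is_sign_sqr s2 /is_sign_sqr t2.
by rewrite -[RHS]mul1r -{1}s2 -[RHS]mul1r -{1}t2; ring.
Qed.

Lemma is_sign_signr k : is_sign ((-1) ^+ k).
Proof. by rewrite -signr_odd; case: (odd k); [right|left]; rewrite ?expr1 ?expr0. Qed.

Definition gram {I : Type} (u : I -> 'I_n -> R) (i j : I) : R :=
  \sum_(k < n) u i k * u j k.

Definition unit_rows {I : Type} (u : I -> 'I_n -> R) : Prop :=
  forall i, \sum_(k < n) u i k ^+ 2 = 1.

Lemma gram_unit_le1 (I : Type) (u : I -> 'I_n -> R) i j :
  unit_rows u -> `|gram u i j| <= 1.
Proof.
move=> hu; apply: le_trans (ler_norm_sum _ _ _) _.
have -> : (1 : R) = \sum_k (u i k ^+ 2 + u j k ^+ 2) / 2.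
  by rewrite -mulr_suml big_split /= !hu; field.
apply: ler_sum => k _; rewrite normrM.
have := sqr_ge0 (`|u i k| - `|u j k|).
rewrite -(real_normK (num_real (u i k))) -(real_normK (num_real (u j k))).
lra.
Qed.

Definition edge_weight_norm (w : 'I_n -> 'I_n -> R) : R :=
  \sum_(i < n) \sum_(j < n | (i < j)%N && G i j) `|w i j|.

Lemma edge_sum_le_weight_norm (w f : 'I_n -> 'I_n -> R) :
  (forall i j, `|f i j| <= 1) -> edge_sum G w f <= edge_weight_norm w.
Proof.
move=> hf; apply: ler_sum => i _; apply: ler_sum => j _.
apply: le_trans (ler_norm _) _; rewrite normrM.
by rewrite -[leRHS]mulr1 ler_wpM2l.
Qed.

Lemma ip_ge (w : 'I_n -> 'I_n -> R) (x : 'I_n -> R) :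
  (forall i, is_sign (x i)) -> edge_sum G w (fun i j => x i * x j) <= ip G w.
Proof.
move=> hx; apply: ub_le_sup; last by exists x.
exists (edge_weight_norm w) => _ [y [hy ->]]; apply: edge_sum_le_weight_norm => i j.
by rewrite normrM; case: (hy i) => ->; case: (hy j) => ->; rewrite ?normrN normr1 mulr1.
Qed.

Lemma ip_le (w : 'I_n -> 'I_n -> R) b :
  (forall x : 'I_n -> R, (forall i, is_sign (x i)) ->
     edge_sum G w (fun i j => x i * x j) <= b) -> ip G w <= b.
Proof.
move=> hb; apply: ge_sup => [|_ [x [hx ->]]]; last exact: hb.
by exists (edge_sum G w (fun i j => 1 * 1)), (fun=> 1); split => //; left.
Qed.

Lemma sdp_ge (w u : 'I_n -> 'I_n -> R) :
  unit_rows u -> edge_sum G w (gram u) <= sdp G w.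
Proof.
move=> hu; apply: ub_le_sup; last by exists u.
exists (edge_weight_norm w) => _ [v [hv ->]].
by apply: edge_sum_le_weight_norm => i j; exact: gram_unit_le1.
Qed.

Lemma sdp_le (w : 'I_n -> 'I_n -> R) b : (0 < n)%N ->
  (forall u, unit_rows u -> edge_sum G w (gram u) <= b) -> sdp G w <= b.
Proof.
move=> n_gt0 hb; apply: ge_sup => [|_ [u [hu ->]]]; last exact: hb.
pose e0 : 'I_n -> 'I_n -> R := fun _ k => (val k == 0%N)%:R.
exists (edge_sum G w (gram e0)), e0; split => // i.
rewrite (bigD1 (Ordinal n_gt0)) //= big1 ?addr0 ?expr1n // => k.
by rewrite -val_eqE /= /e0 => /negbTE ->; rewrite expr0n.
Qed.

End GenericBounds.

Section Cycle.
Variables (R : realType) (m : nat).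
Local Notation N := m.+3.

Definition theta : R := pi / N%:R.
Definition sin_th (k : nat) : R := sin (k%:R * theta).
Definition cos_th (k : nat) : R := cos (k%:R * theta).

Lemma natS_mul_theta k : k.+1%:R * theta = k%:R * theta + theta.
Proof. by rewrite -addn1 natrD mulrDl mul1r. Qed.

Lemma N_mul_theta : N%:R * theta = pi.
Proof. by rewrite /theta mulrC -mulrA mulVf ?mulr1 // pnatr_eq0. Qed.

Lemma last_mul_theta : m.+2%:R * theta = pi - theta.
Proof. by rewrite -N_mul_theta (natS_mul_theta m.+2) addrK. Qed.

Lemma sin_th_rec k : sin_th k.+2 + sin_th k = 2 * cos theta * sin_th k.+1.
Proof.
rewrite /sin_th natS_mul_theta.
have -> : k%:R * theta = k.+1%:R * theta - theta by rewrite natS_mul_theta addrK.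
by rewrite sinD sinB; ring.
Qed.

Lemma sin_th_cross k : cos_th k * sin_th k.+1 - cos_th k.+1 * sin_th k = sin theta.
Proof.
have diff : k.+1%:R * theta - k%:R * theta = theta.
  by rewrite natS_mul_theta addrAC subrr add0r.
by rewrite /sin_th /cos_th -[in RHS]diff sinB; ring.
Qed.

Lemma sin_th1 : sin_th 1 = sin theta.
Proof. by rewrite /sin_th mul1r. Qed.

Lemma sin_th_last : sin_th m.+2 = sin theta.
Proof. by rewrite /sin_th last_mul_theta sinB sinpi cospi; ring. Qed.

Lemma cos_th_last : cos_th m.+2 = - cos theta.
Proof. by rewrite /cos_th last_mul_theta cosB sinpi cospi; ring. Qed.

Lemma sin_th_gt0 k : (0 < k < N)%N -> 0 < sin_th k.
Proof.
case/andP=> k_gt0 k_ltN; have th_gt0 : 0 < theta by rewrite divr_gt0 ?pi_gt0 ?ltr0n.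
apply: sin_gt0_pi; rewrite mulr_gt0 ?ltr0n //=.
by rewrite -N_mul_theta ltr_pM2r ?ltr_nat.
Qed.

Lemma sin_theta_neq0 : sin theta != 0.
Proof. by rewrite -sin_th1 gt_eqF // sin_th_gt0. Qed.

Lemma sin_th_neq0 k : (0 < k < N)%N -> sin_th k != 0.
Proof. by move=> hk; rewrite gt_eqF // sin_th_gt0. Qed.

Definition cycle_form (a : nat -> R) (c : R) (P : nat -> nat -> R) : R :=
  \sum_(0 <= i < m.+2) a i * P i i.+1 + c * P 0%N m.+2.

(* Summed over 1 <= k < N - 1 these squares make up cos theta * |x|^2 minus the
   frustrated form: cos theta is its top eigenvalue, with eigenvector
   (sin (k theta))_k. *)
Definition sos_term (x : nat -> R) (k : nat) : R :=
  (sin_th k.+1 * x k - sin_th k * x k.+1 - sin theta * x 0%N) ^+ 2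
    / (2 * sin_th k * sin_th k.+1).

Lemma sum_sos_term (x : nat -> R) M : (M < m.+2)%N ->
  \sum_(1 <= k < M.+1) sos_term x k =
  cos theta * \sum_(1 <= k < M.+1) x k ^+ 2
  + sin_th M / (2 * sin_th M.+1) * x M.+1 ^+ 2
  - \sum_(1 <= k < M.+1) x k * x k.+1 - x 0%N * x 1%N
  + sin theta / sin_th M.+1 * x 0%N * x M.+1
  + (cos theta / 2 - sin theta * cos_th M.+1 / (2 * sin_th M.+1)) * x 0%N ^+ 2.
Proof.
elim: M => [_|M IH hM].
  rewrite !big_geq // sin_th1 /sin_th /cos_th mul0r sin0 mul1r.
  by field; exact: sin_theta_neq0.
rewrite !(big_nat_recr M.+1) //= (IH (ltnW hM)).
have h1 : sin_th M.+1 != 0 by rewrite sin_th_neq0 //= ltnS ltnW.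
have h2 : sin_th M.+2 != 0 by rewrite sin_th_neq0.
have -> : sin_th M = 2 * cos theta * sin_th M.+1 - sin_th M.+2
  by rewrite -sin_th_rec; ring.
by rewrite /sos_term -(sin_th_cross M.+1); field; rewrite h1 h2.
Qed.

Lemma frustrated_form_le (x : nat -> R) :
  cycle_form (fun=> 1) (-1) (fun i j => x i * x j)
  <= cos theta * \sum_(0 <= k < N) x k ^+ 2.
Proof.
have := @sum_sos_term x m.+1 (ltnSn m.+1).
have sin_th_pen : sin_th m.+1 = 2 * cos theta * sin theta.
  by rewrite -sin_th_last -sin_th_rec /sin_th N_mul_theta sinpi add0r.
rewrite sin_th_last cos_th_last sin_th_pen => sos_eq.
have sos_ge0 : 0 <= \sum_(1 <= k < m.+2) sos_term x k.
  rewrite big_nat_cond; apply: sumr_ge0 => k /andP[/andP[k_gt0 k_lt] _].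
  rewrite divr_ge0 ?sqr_ge0 // !mulr_ge0 ?ltW ?sin_th_gt0 ?k_gt0 //.
  by rewrite (ltn_trans k_lt).
rewrite -subr_ge0 /cycle_form.
rewrite [\sum_(0 <= k < N) _]big_ltn // [\sum_(1 <= k < N) _](big_nat_recr m.+2) //=.
rewrite [\sum_(0 <= k < m.+2) _]big_ltn //= (eq_bigr _ (fun i _ => mul1r _)).
rewrite (le_trans sos_ge0) // sos_eq le_eqVlt; apply/orP; left; apply/eqP.
by field; exact: sin_theta_neq0.
Qed.

Definition at_nat (f : 'I_N -> 'I_N -> R) (i j : nat) : R := f (inord i) (inord j).

Lemma cycle_graph_ltE (i j : nat) : (i < N)%N -> (j < N)%N ->
  ((i < j)%N && ((j == i.+1 %% N) || (i == j.+1 %% N)))%N =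
  ((j == i.+1) || ((i == 0) && (j == m.+2)))%N.
Proof.
move=> i_lt j_lt.
have [i_last|i_nlast] := eqVneq i.+1 N.
  have -> : (i < j)%N = false by apply/negbTE; rewrite -leqNgt; lia.
  by apply/esym/negbTE/negP => /orP[/eqP|/andP[/eqP ? /eqP]]; lia.
rewrite (modn_small (_ : i.+1 < N)%N); last by move/eqP: i_nlast; lia.
have [j_last|j_nlast] := eqVneq j.+1 N.
  by rewrite j_last modnn; apply/idP/idP; lia.
by rewrite modn_small; [apply/idP/idP | move/eqP: j_nlast]; lia.
Qed.

Lemma sum_val_eq (F : 'I_N -> R) k : (k < N)%N -> \sum_(j | val j == k) F j = F (inord k).
Proof.
by move=> k_lt; rewrite (big_pred1 (inord k)) // => j /=; rewrite -val_eqE /= inordK.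
Qed.

Lemma edge_sum_cycle (w f : 'I_N -> 'I_N -> R) :
  edge_sum (@cycle_graph N) w f =
  cycle_form (fun i => at_nat w i i.+1) (at_nat w 0 m.+2) (at_nat f).
Proof.
rewrite /edge_sum (eq_bigr (fun i : 'I_N => \sum_(j | val j == i.+1) w i j * f i j
    + \sum_(j | (val i == 0%N) && (val j == m.+2)) w i j * f i j)); last first.
  move=> i _; rewrite (bigID (fun j : 'I_N => val j == i.+1)) /=.
  congr (_ + _); apply: eq_bigl => j; rewrite /cycle_graph cycle_graph_ltE ?ltn_ord //.
    by case: (val j == i.+1); rewrite ?orbT ?orbF ?andbF.
  by case: eqP => [->|] /=; [case: eqP => [->|] | rewrite andbT].
rewrite big_split /=; congr (_ + _).
  rewrite big_ord_recr /= [X in _ + X]big_pred0 => [|j]; last by rewrite ltn_eqF.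
  rewrite addr0 big_mkord; apply: eq_bigr => i _.
  rewrite sum_val_eq; last by rewrite ltnS.
  by rewrite /at_nat; congr (w _ _ * f _ _); apply: val_inj; rewrite /= inordK // ltnS ltnW.
rewrite big_ord_recl [X in _ + X]big1 => [|i _]; last exact: big_pred0.
rewrite addr0 sum_val_eq // /at_nat.
by congr (w _ _ * f _ _); apply: val_inj; rewrite /= inordK.
Qed.

Lemma eq_cycle_form a a' c c' P P' :
  (forall i, (i < m.+2)%N -> a i * P i i.+1 = a' i * P' i i.+1) ->
  c * P 0%N m.+2 = c' * P' 0%N m.+2 -> cycle_form a c P = cycle_form a' c' P'.
Proof.
move=> eq_path eq_last; rewrite /cycle_form eq_last; congr (_ + _).
by apply: eq_big_nat => i /andP[_]; exact: eq_path.
Qed.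

Lemma cycle_form_linear a b c d k P :
  cycle_form (fun i => a i + k * b i) (c + k * d) P =
  cycle_form a c P + k * cycle_form b d P.
Proof.
rewrite /cycle_form mulrDr mulr_sumr.
under eq_bigr do rewrite mulrDl.
rewrite big_split /= (eq_bigr _ (fun i _ => mulrA _ _ _)) mulrDl mulrA; ring.
Qed.

Lemma cycle_form_gram a c (V : nat -> 'I_N -> R) :
  cycle_form a c (gram V) = \sum_(k < N) cycle_form a c (fun i j => V i k * V j k).
Proof.
rewrite /cycle_form big_split /= -mulr_sumr; congr (_ + _).
by rewrite exchange_big /=; apply: eq_bigr => i _; rewrite mulr_sumr.
Qed.

Lemma frustrated_gram_le (V : nat -> 'I_N -> R) :
  unit_rows V -> cycle_form (fun=> 1) (-1) (gram V) <= N%:R * cos theta.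
Proof.
move=> V_unit; rewrite cycle_form_gram.
apply: le_trans (ler_sum _ (fun k _ => frustrated_form_le (V^~ k))) _.
rewrite -mulr_sumr exchange_big /= (eq_bigr _ (fun i _ => V_unit i)).
by rewrite sumr_const_nat subn0 mulrC.
Qed.

Lemma cycle_form_le_weight a c P :
  (forall i, (i < m.+2)%N -> 0 <= a i) -> (forall i j, `|P i j| <= 1) ->
  cycle_form a c P <= \sum_(0 <= i < m.+2) a i + `|c|.
Proof.
move=> a_ge0 P_le1; apply: lerD.
  apply: ler_sum_nat => i /andP[_ /a_ge0 ai_ge0].
  by rewrite -[leRHS]mulr1 ler_wpM2l // (le_trans (ler_norm _)).
by apply: le_trans (ler_norm _) _; rewrite normrM -[leRHS]mulr1 ler_wpM2l.
Qed.

Lemma cycle_form_gauge a c P (s : nat -> R) : (forall i, is_sign (s i)) ->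
  cycle_form a c P =
  cycle_form (fun i => s i * s i.+1 * a i) (s 0%N * s m.+2 * c) (fun i j => s i * s j * P i j).
Proof.
move=> s_sign; have s2 i : s i * s i = 1 := is_sign_sqr (s_sign i).
apply: eq_cycle_form => [i _|].
  by rewrite -[LHS]mul1r -[X in X * _](mulr1 1) -{1}(s2 i) -(s2 i.+1); ring.
by rewrite -[LHS]mul1r -[X in X * _](mulr1 1) -{1}(s2 0%N) -(s2 m.+2); ring.
Qed.

Lemma gauge_signs (a : nat -> R) :
  exists2 s : nat -> R, forall i, is_sign (s i) & forall i, s i * s i.+1 * a i = `|a i|.
Proof.
exists (fun i => (-1) ^+ (\sum_(j < i) (a j < 0)%R)%N) => i; first exact: is_sign_signr.
rewrite big_ord_recr /= exprD mulrA -expr2 sqrr_sign mul1r.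
by rewrite -normrEsign.
Qed.

Definition cut_signs (f i : nat) : R := if (i <= f)%N then 1 else -1.

Lemma cut_signsS f i : cut_signs f i * cut_signs f i.+1 = if i == f then -1 else 1.
Proof. by rewrite /cut_signs; case: ltngtP; rewrite ?mulrNN ?mulr1 ?mul1r. Qed.

Lemma cycle_form_cut (B : nat -> R) f : (f <= m.+2)%N ->
  cycle_form B (- B m.+2) (fun i j => cut_signs f i * cut_signs f j) =
  \sum_(0 <= i < N) B i - 2 * B f.
Proof.
move=> f_le; rewrite /cycle_form.
under eq_bigr do rewrite cut_signsS.
rewrite (big_nat_recr m.+2) //= /cut_signs leq0n mul1r.
have -> : \sum_(0 <= i < m.+2) B i * (if i == f then -1 else 1) =
          \sum_(0 <= i < m.+2) B i - 2 * \sum_(0 <= i < m.+2 | i == f) B i.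
  rewrite mulr_sumr [X in _ - X]big_mkcond -sumrB; apply: eq_bigr => i _ /=.
  by case: (i == f); ring.
rewrite big_nat1_eq /=; move: f_le; rewrite leq_eqVlt => /orP[/eqP->|f_lt].
  by rewrite ltnn ltnSn; ring.
by rewrite f_lt ltnNge -ltnS f_lt /=; ring.
Qed.

(* Peel off mu times the unweighted frustrated cycle; the remaining weights are nonnegative. *)
Lemma cycle_form_frustrated_le (B : nat -> R) mu (V : nat -> 'I_N -> R) :
  0 <= mu -> (forall i, (i <= m.+2)%N -> mu <= B i) -> unit_rows V ->
  cycle_form B (- B m.+2) (gram V) <=
  \sum_(0 <= i < N) B i - N%:R * mu + mu * (N%:R * cos theta).
Proof.
move=> mu_ge0 mu_le V_unit.
have -> : cycle_form B (- B m.+2) (gram V) =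
    cycle_form (fun i => (B i - mu) + mu * 1) (- (B m.+2 - mu) + mu * -1) (gram V).
  by apply: eq_cycle_form => [i _|]; congr (_ * _); ring.
rewrite cycle_form_linear; apply: lerD; last first.
  by rewrite ler_wpM2l // frustrated_gram_le.
apply: le_trans (cycle_form_le_weight _ _ (fun i j => gram_unit_le1 i j V_unit)) _.
  by move=> i i_lt; rewrite subr_ge0 mu_le // ltnW.
rewrite normrN ger0_norm ?subr_ge0 ?mu_le // sumrB sumr_const_nat subn0.
by rewrite (big_nat_recr m.+2) //= -mulr_natl -[N]addn1 natrD; lra.
Qed.

Definition kappa_cycle : R := N%:R / (N%:R - 2) * cos theta.

Lemma kappa_cycle_mul : kappa_cycle * m.+1%:R = N%:R * cos theta.
Proof.
rewrite /kappa_cycle (_ : N%:R - 2 = m.+1%:R); last by rewrite -[N]addn2 natrD addrK.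
by field.
Qed.

Lemma kappa_cycle_ge1 : 1 <= kappa_cycle.
Proof.
have := frustrated_form_le (fun=> 1).
rewrite /cycle_form (eq_bigr _ (fun i _ => mulr1 _)) sumr_const_nat subn0 !mulr1.
rewrite sumr_const_nat subn0 => ones_le.
rewrite -(ler_pM2r (ltr0Sn _ m)) mul1r kappa_cycle_mul mulrC.
by apply: le_trans ones_le; rewrite -[m.+2]addn1 natrD; lra.
Qed.

Lemma kappa_cycle_frustrated W mu : 0 <= mu -> N%:R * mu <= W ->
  W - N%:R * mu + mu * (N%:R * cos theta) <= kappa_cycle * (W - 2 * mu).
Proof.
move=> mu_ge0 muN_le; rewrite -kappa_cycle_mul.
have := kappa_cycle_ge1; have -> : N%:R = m.+1%:R + 2 :> R by rewrite -[N]addn2 natrD.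
move: muN_le; rewrite -[N]addn2 natrD; nra.
Qed.

Lemma frustrated_vector_le_sign (B : nat -> R) (V : nat -> 'I_N -> R) :
  (forall i, 0 <= B i) -> unit_rows V ->
  exists2 e : nat -> R, forall i, is_sign (e i) &
    cycle_form B (- B m.+2) (gram V) <=
    kappa_cycle * cycle_form B (- B m.+2) (fun i j => e i * e j).
Proof.
move=> B_ge0 V_unit.
have [f _ f_min] := arg_minP (fun i : 'I_N => B i) (isT : xpredT ord0).
exists (cut_signs f) => [i|]; first by rewrite /cut_signs; case: ifP; [left|right].
rewrite cycle_form_cut; last by rewrite -ltnS.
apply: le_trans (kappa_cycle_frustrated (B_ge0 f) _); last first.
  rewrite mulr_natl -[X in _ *+ X](subn0 N) -sumr_const_nat.
  apply: ler_sum_nat => i /andP[_ i_lt].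
  by have := f_min (Ordinal i_lt) isT.
apply: cycle_form_frustrated_le => // i i_le.
by have := f_min (Ordinal (i_le : (i < N)%N)) isT.
Qed.

Lemma vector_le_sign (b : nat -> R) t (V : nat -> 'I_N -> R) :
  (forall i, 0 <= b i) -> unit_rows V ->
  exists2 e : nat -> R, forall i, is_sign (e i) &
    cycle_form b t (gram V) <= kappa_cycle * cycle_form b t (fun i j => e i * e j).
Proof.
move=> b_ge0 V_unit; have [t_ge0|t_lt0] := leP 0 t.
  exists (fun=> 1) => [i|]; first by left.
  apply: le_trans (cycle_form_le_weight t (fun i _ => b_ge0 i)
    (fun i j => gram_unit_le1 i j V_unit)) _.
  rewrite ger0_norm // /cycle_form !mulr1 (eq_bigr _ (fun i _ => mulr1 _)).
  by rewrite ler_peMl ?kappa_cycle_ge1 // addr_ge0 ?sumr_ge0.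
pose B i := if (i < m.+2)%N then b i else - t.
have B_ge0 i : 0 <= B i by rewrite /B; case: ifP => _; rewrite ?b_ge0 ?oppr_ge0 ?ltW.
have bB P : cycle_form b t P = cycle_form B (- B m.+2) P.
  by apply: eq_cycle_form => [i i_lt|]; rewrite /B ?i_lt ?ltnn ?opprK.
have [e e_sign] := frustrated_vector_le_sign B_ge0 V_unit.
by exists e; rewrite ?bB.
Qed.

Lemma edge_sum_gram_le (w u : 'I_N -> 'I_N -> R) : unit_rows u ->
  edge_sum (@cycle_graph N) w (gram u) <= kappa_cycle * ip (@cycle_graph N) w.
Proof.
move=> u_unit; set a := fun i => at_nat w i i.+1.
have [s s_sign s_gauge] := gauge_signs a.
have gauged_weights : (fun i => s i * s i.+1 * a i) = fun i => `|a i|.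
  by apply/funext => i; exact: s_gauge.
pose V i k := s i * u (inord i) k.
have V_unit : unit_rows V.
  by move=> i; rewrite -(u_unit (inord i)); apply: eq_bigr => k _; rewrite exprMn expr2 (is_sign_sqr (s_sign i)) mul1r.
have gramV : gram V = fun i j => s i * s j * at_nat (gram u) i j.
  apply/funext => i; apply/funext => j; rewrite /gram /at_nat mulr_sumr.
  by apply: eq_bigr => k _; rewrite /V; ring.
rewrite edge_sum_cycle -/a (cycle_form_gauge _ _ _ s_sign) gauged_weights -gramV.
have [e e_sign le_e] := vector_le_sign (s 0%N * s m.+2 * at_nat w 0 m.+2)
  (fun i => normr_ge0 (a i)) V_unit.
apply: le_trans le_e _; rewrite ler_wpM2l ?(le_trans ler01 kappa_cycle_ge1) //.
pose x (i : 'I_N) := s i * e i.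
apply: le_trans (ip_ge _ w (x := x) (fun i => is_signM (s_sign i) (e_sign i))).
rewrite edge_sum_cycle -/a [leRHS](cycle_form_gauge _ _ _ s_sign) gauged_weights.
rewrite le_eqVlt; apply/orP; left; apply/eqP.
apply: eq_cycle_form => [i i_lt|]; rewrite /at_nat /x !inordK ?is_sign_conj //.
by rewrite ltnS ltnW.
Qed.

Definition frustrated_weight (i j : 'I_N) : R :=
  if (val i == 0%N) && (val j == m.+2) then -1 else 1.

Lemma edge_sum_frustrated_weight f :
  edge_sum (@cycle_graph N) frustrated_weight f = cycle_form (fun=> 1) (-1) (at_nat f).
Proof.
rewrite edge_sum_cycle; apply: eq_cycle_form => [i i_lt|].
  rewrite /at_nat /frustrated_weight /= (inordK (ltnW i_lt)) (inordK (i_lt : i.+1 < N)%N).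
  by case: eqP => [->|].
by rewrite /at_nat /frustrated_weight /= !inordK // !eqxx.
Qed.

Lemma sign_telescope_le (X : nat -> R) : (forall i, is_sign (X i)) ->
  forall M, 1 - X 0%N * X M <= \sum_(0 <= i < M) (1 - X i * X i.+1).
Proof.
move=> X_sign; elim=> [|M IH]; first by rewrite big_geq // is_sign_sqr ?subrr.
rewrite big_nat_recr //=.
have : 0 <= (1 - X 0%N * X M) * (1 - X M * X M.+1).
  by case: (X_sign 0%N) => ->; case: (X_sign M) => ->; case: (X_sign M.+1) => ->;
     rewrite ?mulr1 ?mulrN1 ?mul1r ?mulN1r ?opprK; lra.
have := is_sign_sqr (X_sign M).
have -> : (1 - X 0%N * X M) * (1 - X M * X M.+1) =
  1 - X 0%N * X M - X M * X M.+1 + X 0%N * X M.+1 * (X M * X M) by ring.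
move=> ->; lra.
Qed.

Lemma ip_frustrated_weight : ip (@cycle_graph N) frustrated_weight = m.+1%:R.
Proof.
have frustrated_ones : cycle_form (fun=> 1) (-1) (fun _ _ => 1) = m.+1%:R.
  by rewrite /cycle_form !mulr1 sumr_const_nat subn0 mulrS; lra.
apply/le_anti/andP; split.
  apply: ip_le => x x_sign; rewrite edge_sum_frustrated_weight.
  have := sign_telescope_le (fun i => x_sign (inord i)) m.+2.
  rewrite sumrB sumr_const_nat subn0 /cycle_form /at_nat (eq_bigr _ (fun i _ => mul1r _)).
  by rewrite mulrS; lra.
have := ip_ge (@cycle_graph N) frustrated_weight (x := fun=> 1) (fun=> or_introl erefl).
by rewrite edge_sum_frustrated_weight /at_nat mulr1 frustrated_ones.
Qed.

(* The regular N-gon: consecutive vertices have inner product cos theta, the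
   first and last -cos theta. *)
Definition polygon (i k : 'I_N) : R :=
  if val k == 0%N then cos_th i else if val k == 1%N then sin_th i else 0.

Lemma gram_polygon i j : gram polygon i j = cos_th i * cos_th j + sin_th i * sin_th j.
Proof.
rewrite /gram 2!big_ord_recl big1 => [|k _]; last by rewrite /polygon /= mul0r.
by rewrite /polygon /= addr0.
Qed.

Lemma polygon_unit : unit_rows polygon.
Proof.
move=> i; rewrite (eq_bigr _ (fun k _ => expr2 _)) -/(gram polygon i i) gram_polygon.
by rewrite -!expr2 cos2Dsin2.
Qed.

Lemma sdp_frustrated_weight_ge : N%:R * cos theta <= sdp (@cycle_graph N) frustrated_weight.
Proof.
have polygon_edge i : (i < m.+2)%N -> at_nat (gram polygon) i i.+1 = cos theta.
  move=> i_lt; rewrite /at_nat gram_polygon (inordK (ltnW i_lt)) (inordK (i_lt : i.+1 < N)%N).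
  by rewrite /cos_th /sin_th -cosB natS_mul_theta opprD addrA subrr add0r cosN.
have polygon_closing : at_nat (gram polygon) 0 m.+2 = - cos theta.
  by rewrite /at_nat gram_polygon !inordK // cos_th_last /cos_th /sin_th !mul0r cos0 sin0; ring.
have polygon_value : cycle_form (fun=> 1) (-1) (at_nat (gram polygon)) = N%:R * cos theta.
  rewrite /cycle_form polygon_closing.
  under eq_big_nat => i /andP[_ i_lt] do rewrite mul1r polygon_edge //.
  by rewrite sumr_const_nat subn0 -mulr_natl [N%:R]mulrS; lra.
rewrite -polygon_value -edge_sum_frustrated_weight; exact: sdp_ge polygon_unit.
Qed.

Lemma ratio_le_kappa_cycle (w : 'I_N -> 'I_N -> R) : 0 < ip (@cycle_graph N) w ->
  sdp (@cycle_graph N) w / ip (@cycle_graph N) w <= kappa_cycle.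
Proof.
move=> ip_gt0; rewrite ler_pdivrMr //; apply: sdp_le => // u.
exact: edge_sum_gram_le.
Qed.

Lemma ratio_frustrated_weight :
  sdp (@cycle_graph N) frustrated_weight / ip (@cycle_graph N) frustrated_weight = kappa_cycle.
Proof.
apply/le_anti/andP; split; first by rewrite ratio_le_kappa_cycle // ip_frustrated_weight.
rewrite ip_frustrated_weight ler_pdivlMr // kappa_cycle_mul.
exact: sdp_frustrated_weight_ge.
Qed.

End Cycle.

Theorem mainTheorem6 (R : realType) (n : nat) (hn : (3 <= n)%N) :
  @grothendieck_const R n (@cycle_graph n) =
    (n%:R / (n%:R - 2)) * cos (pi / n%:R) :> R.
Proof.
case: n hn => [|[|[|m]]] // _; rewrite -[RHS]/(kappa_cycle R m) /grothendieck_const.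
set ratios := (X in sup X = _).
have kappa_ratio : ratios (kappa_cycle R m).
  by exists (@frustrated_weight R m); rewrite ratio_frustrated_weight ip_frustrated_weight.
have kappa_ub : ubound ratios (kappa_cycle R m).
  by move=> _ [w [ip_gt0 ->]]; exact: ratio_le_kappa_cycle.
apply/le_anti/andP; split; first exact: ge_sup (ex_intro _ _ kappa_ratio) kappa_ub.
by apply: ub_le_sup => //; exists (kappa_cycle R m).
Qed.
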